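(* Let $n, k \in \mathbb{N}$, $m \in \mathbb{Z}$ with $0 \le m \le n-1$, and let $F \colon \mathcal{K}_k^n \to \mathbb{Z}^{n-1}$ be such that $\|F(K') - F(K)\|_\infty \le 1$ for all $K, K' \in \mathcal{K}_k^n$ with $\dim(K \cap K') \ge m$. Then $\|F(K') - F(K)\|_\infty \le m+1$ for all $K, K' \in \mathcal{K}_k^n$ with $K \cap K' \ne \emptyset$.
   Context: $\mathcal{K}_k^n = \{\prod_{s=1}^n [\frac{i_s-1}{k}, \frac{i_s}{k}] : i_s \in \{1,\dots,k\}\}$ is the division of $[0,1]^n$ into $k^n$ closed cubes; $\dim$ is topological dimension (the dimension of the common face of two cubes); $\mathbb{Z}^0=\{0\}$. *)

From mathcomp Require Import all_boot all_order all_algebra.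
From mathcomp Require Import reals.
Set Implicit Arguments. Unset Strict Implicit. Unset Printing Implicit Defensive.
Import Order.TTheory GRing.Theory Num.Theory.
Local Open Scope ring_scope.

(* A cube of K_k^n is indexed by i : 'I_n -> 'I_k (0-based: the paper's
   i_s in {1..k} corresponds to (i s).+1).  Its point set in R^n is
   prod_s [ i_s / k , (i_s + 1) / k ]. *)
Definition cube_index (n k : nat) := {ffun 'I_n -> 'I_k}.

Definition cube {R : realType} (n k : nat) (i : cube_index n k)
  : ('I_n -> R) -> Prop :=
  fun x => forall s : 'I_n,
    (i s)%:R / k%:R <= x s /\ x s <= (i s).+1%:R / k%:R.

Definition cube_inter {R : realType} (n k : nat) (K K' : cube_index n k)
  : ('I_n -> R) -> Prop := fun x => cube K x /\ cube K' x.

Definition nonempty_set {R : realType} (n : nat) (A : ('I_n -> R) -> Prop) :=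
  exists x, A x.

(* dim A >= m, for A a (possibly empty) box prod_s [a_s, b_s] (such as the
   intersection of two cubes): A is nonempty (dim of the empty set is -1)
   and at least m coordinates s have a non-degenerate factor, i.e. two
   points of A differ in coordinate s.  For a box this is exactly its
   topological dimension (the number of non-degenerate factors). *)
Definition box_dim_ge {R : realType} (n : nat) (A : ('I_n -> R) -> Prop)
  (m : nat) : Prop :=
  nonempty_set A /\
  exists S : {set 'I_n}, (m <= #|S|)%N /\
    forall s, s \in S -> exists x y, A x /\ A y /\ x s <> y s.

Definition supdist (p : nat) (u v : 'I_p -> int) : nat :=
  (\max_(j < p) `|v j - u j|%N)%N.

From mathcomp Require Import all_boot all_order all_algebra.
From mathcomp Require Import reals.
From mathcomp Require Import zify.
Set Implicit Arguments. Unset Strict Implicit. Unset Printing Implicit Defensive.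
Import Order.TTheory GRing.Theory Num.Theory.

(* Cubes that meet have indices differing by at most 1 in every coordinate,
   and the intersection of such cubes has one non-degenerate factor for each
   coordinate where the indices agree.  Splicing the coordinates of K' into K
   in m+1 consecutive blocks of width n-m gives a chain from K to K' whose
   consecutive cubes agree in at least m coordinates; F moves by at most 1
   along each of the m+1 links. *)

Lemma supdist_refl p (u : 'I_p -> int) : supdist u u = 0%N.
Proof. by apply/eqP; rewrite -leqn0; apply/bigmax_leqP => j _; rewrite subrr. Qed.

Lemma supdist_triangle p (u v w : 'I_p -> int) :
  (supdist u w <= supdist u v + supdist v w)%N.
Proof.
apply/bigmax_leqP => j _.
apply: leq_trans (leq_add (@leq_bigmax _ (fun i => `|(v i - u i)%R|%N) j)
                         (@leq_bigmax _ (fun i => `|(w i - v i)%R|%N) j)).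
by rewrite addnC leqD_dist.
Qed.

Lemma supdist_chain p (u : nat -> 'I_p -> int) :
  (forall j, supdist (u j) (u j.+1) <= 1)%N ->
  forall j, (supdist (u 0%N) (u j) <= j)%N.
Proof.
move=> step; elim=> [|j IH]; first by rewrite supdist_refl.
apply: leq_trans (supdist_triangle _ (u j) _) (leq_trans (leq_add IH (step j)) _).
by rewrite addn1.
Qed.

Lemma card_nat_interval n a b :
  (#|[set s : 'I_n | (a <= s < b)%N]| <= b - a)%N.
Proof.
rewrite cardE -(size_map val) -(size_iota a (b - a)).
apply: uniq_leq_size; first by rewrite (map_inj_uniq val_inj) enum_uniq.
move=> x /mapP [s]; rewrite mem_enum inE => hs ->; rewrite mem_iota /=.
by case/andP: hs => h1 h2; apply/andP; split; lia.
Qed.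

Local Open Scope ring_scope.

Section Cubes.

Variables (n k : nat).
Implicit Types (K L : cube_index n k).

Definition adjacent K L := forall s, (K s <= (L s).+1)%N /\ (L s <= (K s).+1)%N.

Lemma adjacent_of_meet (R : realType) K L :
  nonempty_set (cube_inter (R:=R) K L) -> adjacent K L.
Proof.
case=> x [HK HL] s; have [a1 a2] := HK s; have [b1 b2] := HL s.
have k_gt0 : (0 < k)%N := leq_ltn_trans (leq0n _) (ltn_ord (K s)).
have kV_gt0 : 0 < k%:R^-1 :> R by rewrite invr_gt0 ltr0n.
split; rewrite -(ler_nat R) -(ler_pM2r kV_gt0).
- exact: le_trans a1 b2.
- exact: le_trans b1 a2.
Qed.

(* Points of the intersection: in coordinates where the indices differ the
   only choice is the common face max(K s, L s) / k; where they agree, the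
   offset b in {0, 1} selects either end of the common factor. *)
Lemma box_dim_ge_of_adjacent (R : realType) m K L : adjacent K L ->
  (m <= #|[set s | K s == L s]|)%N -> box_dim_ge (cube_inter (R:=R) K L) m.
Proof.
move=> adjKL hm.
pose pt (b : nat) : 'I_n -> R := fun s =>
  (if K s == L s then (K s + b)%N else maxn (K s) (L s))%:R / k%:R.
have kV_ge0 : 0 <= k%:R^-1 :> R by rewrite invr_ge0 ler0n.
have pt_in : forall b, (b <= 1)%N -> cube_inter K L (pt b).
  move=> b hb; split=> s; rewrite /pt; have [h1 h2] := adjKL s;
    split; apply: ler_wpM2r => //; rewrite ler_nat;
    case: eqP => [e|ne]; try rewrite -e; lia.
split; first by exists (pt 0%N); apply: pt_in.
exists [set s | K s == L s]; split => // s; rewrite inE => /eqP e.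
exists (pt 0%N), (pt 1%N); split; [exact: pt_in | split; first exact: pt_in].
have k_gt0 : (0 < k)%N := leq_ltn_trans (leq0n _) (ltn_ord (K s)).
rewrite /pt e eqxx => /(congr1 (fun z => z * k%:R)).
by rewrite !divfK ?pnatr_eq0 -?lt0n // => /eqP; rewrite eqr_nat; lia.
Qed.

Definition splice K L (t : nat) : cube_index n k :=
  [ffun s : 'I_n => if (s < t)%N then L s else K s].

Lemma splice0 K L : splice K L 0 = K.
Proof. by apply/ffunP => s; rewrite ffunE. Qed.

Lemma splice_full K L t : (n <= t)%N -> splice K L t = L.
Proof. by move=> hnt; apply/ffunP => s; rewrite ffunE (leq_trans (ltn_ord s)). Qed.

Lemma splice_adjacent K L a b :
  adjacent K L -> adjacent (splice K L a) (splice K L b).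
Proof.
move=> adjKL s; rewrite !ffunE; have [h1 h2] := adjKL s.
by case: ifP; case: ifP => _ _; lia.
Qed.

Lemma splice_agree K L a b : (a <= b)%N ->
  (n - (b - a) <= #|[set s | splice K L a s == splice K L b s]|)%N.
Proof.
move=> hab.
have outside : ~: [set s : 'I_n | (a <= s < b)%N]
                 \subset [set s | splice K L a s == splice K L b s].
  apply/subsetP => s; rewrite !inE !ffunE => hs.
  by case: ifP => h1; case: ifP => h2 //; exfalso; lia.
apply: leq_trans (subset_leq_card outside).
have := cardsC [set s : 'I_n | (a <= s < b)%N].
have := card_nat_interval n a b.
rewrite card_ord; lia.
Qed.

End Cubes.

Theorem mainTheorem6 (R : realType) (n k m : nat) (Hm : (m < n)%N)
  (F : cube_index n k -> ('I_n.-1 -> int))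
  (HF : forall K K' : cube_index n k,
      box_dim_ge (cube_inter (R:=R) K K') m ->
      (supdist (F K) (F K') <= 1)%N) :
  forall K K' : cube_index n k,
    nonempty_set (cube_inter (R:=R) K K') ->
    (supdist (F K) (F K') <= m.+1)%N.
Proof.
move=> K K' meet.
set c := (n - m)%N.
pose P j := splice K K' (j * c).
have link j : (supdist (F (P j)) (F (P j.+1)) <= 1)%N.
  apply: HF; apply: box_dim_ge_of_adjacent.
    exact/splice_adjacent/adjacent_of_meet/meet.
  apply: leq_trans (splice_agree K K' (leq_mul (leqnSn j) (leqnn c))).
  by rewrite mulSn addnK /c; lia.
have := supdist_chain link m.+1.
by rewrite /P splice0 splice_full // /c; nia.
Qed.
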